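(* Let $\mathcal D$ be a preduoidal category and $T$ a separately opmonoidal monad on $\mathcal D$, and suppose $\mathcal D^T$, with its lifted monoidal structures $(\circ,(\bot,T^\circ_0))$ and $(\bullet,(1,T^\bullet_0))$, carries a duoidal structure with interchange law $\xi_{a,b,c,d}\colon (a\bullet b)\circ(c\bullet d)\to(a\circ c)\bullet(b\circ d)$ and structure morphisms $\nu,\varpi,\iota$. Then $\nu,\varpi,\iota$ together with $$R_{a,b,c,d} := \xi_{Ta,Tb,Tc,Td}\cdot\big((\eta_a\bullet\eta_b)\circ(\eta_c\bullet\eta_d)\big)\colon (a\bullet b)\circ(c\bullet d)\to(Ta\circ Tc)\bullet(Tb\circ Td),\quad a,b,c,d\in\mathcal D$$ (with $Ta$ the free $T$-algebra $(Ta,\mu_a)$) form an R-matrix on $T$.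
   Context: Composition of morphisms is written $g\cdot f$ ($f$ first). A preduoidal category is a category $\mathcal D$ with two monoidal structures $(\circ,\bot)$ and $(\bullet,1)$ (associators $\alpha$, unitors $\lambda^\circ,\rho^\circ,\lambda^\bullet,\rho^\bullet$). A bimonad on a monoidal category $(\mathcal C,\otimes,I)$ is a monad $(B,\mu,\eta)$ with an opmonoidal structure $B_2\colon B(x\otimes y)\to Bx\otimes By$, $B_0\colon BI\to I$ such that $\mu,\eta$ are opmonoidal. A separately opmonoidal monad on $\mathcal D$ is a monad $(T,\mu,\eta)$ with a bimonad structure $(T^\circ_2,T^\circ_0)$ on $(\mathcal D,\circ,\bot)$ and one $(T^\bullet_2,T^\bullet_0)$ on $(\mathcal D,\bullet,1)$. Lifted monoidal structures on $\mathcal D^T$: $(a,\alpha)\circ(b,\beta)=(a\circ b,(\alpha\circ\beta)\cdot T^\circ_{2,a,b})$, unit $(\bot,T^\circ_0)$; $(a,\alpha)\bullet(b,\beta)=(a\bullet b,(\alpha\bullet\beta)\cdot T^\bullet_{2,a,b})$, unit $(1,T^\bullet_0)$. Duoidal category: a preduoidal category with a natural transformation $\zeta_{x,y,a,b}\colon (x\bullet y)\circ(a\bullet b)\to(x\circ a)\bullet(y\circ b)$ and morphisms $\nu\colon\bot\to\bot\bullet\bot$, $\varpi\colon 1\circ 1\to 1$, $\iota\colon\bot\to 1$ such that $(1,\varpi,\iota)$ is a monoid in $(\mathcal D,\circ,\bot)$, $(\bot,\nu,\iota)$ is a comonoid in $(\mathcal D,\bullet,1)$, and: (A1) $(\alpha\bullet\alpha)\cdot\zeta_{x\circ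 a,y\circ b,c,d}\cdot(\zeta_{x,y,a,b}\circ\mathrm{id}) = \zeta_{x,y,a\circ c,b\circ d}\cdot(\mathrm{id}\circ\zeta_{a,b,c,d})\cdot\alpha$; (A2) $\alpha\cdot(\zeta_{x,a,y,b}\bullet\mathrm{id})\cdot\zeta_{x\bullet a,c,y\bullet b,d} = (\mathrm{id}\bullet\zeta_{a,c,b,d})\cdot\zeta_{x,a\bullet c,y,b\bullet d}\cdot(\alpha\circ\alpha)$; (U) $\zeta_{\bot,\bot,a,b}\cdot(\nu\circ\mathrm{id})=((\lambda^\circ_a)^{-1}\bullet(\lambda^\circ_b)^{-1})\cdot\lambda^\circ_{a\bullet b}$, $\zeta_{a,b,\bot,\bot}\cdot(\mathrm{id}\circ\nu)=((\rho^\circ_a)^{-1}\bullet(\rho^\circ_b)^{-1})\cdot\rho^\circ_{a\bullet b}$, $(\varpi\bullet\mathrm{id})\cdot\zeta_{1,a,1,b}=(\lambda^\bullet_{a\circ b})^{-1}\cdot(\lambda^\bullet_a\circ\lambda^\bullet_b)$, $(\mathrm{id}\bullet\varpi)\cdot\zeta_{a,1,b,1}=(\rho^\bullet_{a\circ b})^{-1}\cdot(\rho^\bullet_a\circ\rho^\bullet_b)$. A duoidal structure on $\mathcal D^T$ means such data for the lifted structures with $\xi$ a natural family of $T$-algebra morphisms and $\nu,\varpi,\iota$ morphisms of $T$-algebras. R-matrix on $T$: a natural transformation $R_{a,b,c,d}\colon (a\bullet b)\circ(c\bullet d)\to(Ta\circ Tc)\bullet(Tb\circ Td)$ together with morphisms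 of $T$-algebras $\nu\colon(\bot,T^\circ_0)\to(\bot,T^\circ_0)\bullet(\bot,T^\circ_0)$, $\varpi\colon(1,T^\bullet_0)\circ(1,T^\bullet_0)\to(1,T^\bullet_0)$, $\iota\colon(\bot,T^\circ_0)\to(1,T^\bullet_0)$, such that $(1,\varpi,\iota)$ is a monoid in $(\mathcal D^T,\circ,\bot)$, $(\bot,\nu,\iota)$ is a comonoid in $(\mathcal D^T,\bullet,1)$, and (associators suppressed): (R-unit) for all $T$-algebras $(a,\alpha),(b,\beta)$: $((T^\circ_0\circ\alpha)\bullet(T^\circ_0\circ\beta))\cdot R_{\bot,\bot,a,b}\cdot(\nu\circ\mathrm{id})=((\lambda^\circ_a)^{-1}\bullet(\lambda^\circ_b)^{-1})\cdot\lambda^\circ_{a\bullet b}$; $((\alpha\circ T^\circ_0)\bullet(\beta\circ T^\circ_0))\cdot R_{a,b,\bot,\bot}\cdot(\mathrm{id}\circ\nu)=((\rho^\circ_a)^{-1}\bullet(\rho^\circ_b)^{-1})\cdot\rho^\circ_{a\bullet b}$; $(\varpi\bullet\mathrm{id})\cdot((T^\bullet_0\circ T^\bullet_0)\bullet(\alpha\circ\beta))\cdot R_{1,a,1,b}=(\lambda^\bullet_{a\circ b})^{-1}\cdot(\lambda^\bullet_a\circ\lambda^\bullet_b)$; $(\mathrm{id}\bullet\varpi)\cdot((\alpha\circ\beta)\bullet(T^\bullet_0\circ T^\bullet_0))\cdot R_{a,1,b,1}=(\rho^\bullet_{a\circ b})^{-1}\cdot(\rho^\bullet_a\circ\rho^\bullet_b)$.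 (R-lift) for all objects: $((\mu_a\circ\mu_c)\bullet(\mu_b\circ\mu_d))\cdot R_{Ta,Tb,Tc,Td}\cdot(T^\bullet_{2,a,b}\circ T^\bullet_{2,c,d})\cdot T^\circ_{2,a\bullet b,c\bullet d} = ((\mu_a\circ\mu_c)\bullet(\mu_b\circ\mu_d))\cdot(T^\circ_{2,Ta,Tc}\bullet T^\circ_{2,Tb,Td})\cdot T^\bullet_{2,Ta\circ Tc,Tb\circ Td}\cdot TR_{a,b,c,d}$. (R-1) for all objects: $((\mu_a\circ\mu_c\circ Tx)\bullet(\mu_b\circ\mu_d\circ Ty))\cdot((T^\circ_{2,Ta,Tc}\circ Tx)\bullet(T^\circ_{2,Tb,Td}\circ Ty))\cdot R_{Ta\circ Tc,Tb\circ Td,x,y}\cdot(R_{a,b,c,d}\circ\mathrm{id}) = ((Ta\circ\mu_c\circ\mu_x)\bullet(Tb\circ\mu_d\circ\mu_y))\cdot((Ta\circ T^\circ_{2,Tc,Tx})\bullet(Tb\circ T^\circ_{2,Td,Ty}))\cdot R_{a,b,Tc\circ Tx,Td\circ Ty}\cdot(\mathrm{id}\circ R_{c,d,x,y})$. (R-2) for all objects: $(((\mu_x\circ\mu_y)\bullet(\mu_a\circ\mu_b))\bullet\mathrm{id})\cdot(R_{Tx,Ta,Ty,Tb}\bullet\mathrm{id})\cdot((T^\bullet_{2,x,a}\circ T^\bullet_{2,y,b})\bullet\mathrm{id})\cdot R_{x\bullet a,c,y\bullet b,d} = (\mathrm{id}\bullet((\mu_a\circ\mu_b)\bullet(\mu_c\circ\mu_d)))\cdot(\mathrm{id}\bullet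 R_{Ta,Tc,Tb,Td})\cdot(\mathrm{id}\bullet(T^\bullet_{2,a,c}\circ T^\bullet_{2,b,d}))\cdot R_{x,a\bullet c,y,b\bullet d}\cdot(\alpha\circ\alpha)$. *)

From Stdlib Require Import Utf8.
Set Implicit Arguments.
Unset Strict Implicit.

Record Category := {
  Obj : Type;
  Hom : Obj -> Obj -> Type;
  idm : forall x, Hom x x;
  comp : forall x y z, Hom y z -> Hom x y -> Hom x z;
  comp_assoc : forall x y z w (h : Hom z w) (g : Hom y z) (f : Hom x y),
      comp h (comp g f) = comp (comp h g) f;
  comp_idl : forall x y (f : Hom x y), comp (idm y) f = f;
  comp_idr : forall x y (f : Hom x y), comp f (idm x) = f }.
Arguments Hom {c} _ _.
Arguments idm {c} x.
Arguments comp {c x y z} _ _.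
Arguments comp_assoc {c x y z w} h g f.
Arguments comp_idl {c x y} f.
Arguments comp_idr {c x y} f.

Notation "g · f" := (comp g f) (at level 45, left associativity).

Record MonoidalData (C : Category) := {
  tens : Obj C -> Obj C -> Obj C;
  tensm : forall x x' y y', Hom x x' -> Hom y y' -> Hom (tens x y) (tens x' y');
  munit : Obj C;
  assoc : forall x y z, Hom (tens (tens x y) z) (tens x (tens y z));
  assoc_inv : forall x y z, Hom (tens x (tens y z)) (tens (tens x y) z);
  lunit : forall x, Hom (tens munit x) x;
  lunit_inv : forall x, Hom x (tens munit x);
  runit : forall x, Hom (tens x munit) x;
  runit_inv : forall x, Hom x (tens x munit) }.
Arguments tens {C} _ x y.
Arguments tensm {C} _ {x x' y y'} _ _.
Arguments munit {C} _.
Arguments assoc {C} _ x y z.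
Arguments assoc_inv {C} _ x y z.
Arguments lunit {C} _ x.
Arguments lunit_inv {C} _ x.
Arguments runit {C} _ x.
Arguments runit_inv {C} _ x.

Record MonoidalLaws (C : Category) (M : MonoidalData C) : Prop := {
  ml_tens_id : forall x y, tensm M (idm x) (idm y) = idm (tens M x y);
  ml_tens_comp : forall x x' x'' y y' y'' (f : Hom x x') (f' : Hom x' x'')
      (g : Hom y y') (g' : Hom y' y''),
      tensm M (f' · f) (g' · g) = tensm M f' g' · tensm M f g;
  ml_assoc_iso1 : forall x y z, assoc_inv M x y z · assoc M x y z = idm _;
  ml_assoc_iso2 : forall x y z, assoc M x y z · assoc_inv M x y z = idm _;
  ml_lunit_iso1 : forall x, lunit_inv M x · lunit M x = idm _;
  ml_lunit_iso2 : forall x, lunit M x · lunit_inv M x = idm _;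
  ml_runit_iso1 : forall x, runit_inv M x · runit M x = idm _;
  ml_runit_iso2 : forall x, runit M x · runit_inv M x = idm _;
  ml_assoc_nat : forall x x' y y' z z' (f : Hom x x') (g : Hom y y') (h : Hom z z'),
      assoc M x' y' z' · tensm M (tensm M f g) h
      = tensm M f (tensm M g h) · assoc M x y z;
  ml_lunit_nat : forall x x' (f : Hom x x'),
      lunit M x' · tensm M (idm (munit M)) f = f · lunit M x;
  ml_runit_nat : forall x x' (f : Hom x x'),
      runit M x' · tensm M f (idm (munit M)) = f · runit M x;
  ml_pentagon : forall x y z w,
      assoc M x y (tens M z w) · assoc M (tens M x y) z w
      = tensm M (idm x) (assoc M y z w) · assoc M x (tens M y z) w
        · tensm M (assoc M x y z) (idm w);
  ml_triangle : forall x y,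
      tensm M (idm x) (lunit M y) · assoc M x (munit M) y
      = tensm M (runit M x) (idm y) }.

Record Monoidal (C : Category) := {
  mdata :> MonoidalData C;
  mlaws : MonoidalLaws mdata }.

Record Preduoidal := {
  pcat :> Category;
  circ : Monoidal pcat;
  bull : Monoidal pcat }.

Record MonadData (C : Category) := {
  mobj : Obj C -> Obj C;
  mmap : forall x y, Hom x y -> Hom (mobj x) (mobj y);
  mu : forall x, Hom (mobj (mobj x)) (mobj x);
  eta : forall x, Hom x (mobj x) }.
Arguments mobj {C} _ _.
Arguments mmap {C} _ {x y} _.
Arguments mu {C} _ _.
Arguments eta {C} _ _.

Record MonadLaws (C : Category) (T : MonadData C) : Prop := {
  mo_map_id : forall x, mmap T (idm x) = idm (mobj T x);
  mo_map_comp : forall x y z (g : Hom y z) (f : Hom x y),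
      mmap T (g · f) = mmap T g · mmap T f;
  mo_mu_nat : forall x y (f : Hom x y),
      mu T y · mmap T (mmap T f) = mmap T f · mu T x;
  mo_eta_nat : forall x y (f : Hom x y), eta T y · f = mmap T f · eta T x;
  mo_assoc : forall x, mu T x · mmap T (mu T x) = mu T x · mu T (mobj T x);
  mo_unit_l : forall x, mu T x · eta T (mobj T x) = idm (mobj T x);
  mo_unit_r : forall x, mu T x · mmap T (eta T x) = idm (mobj T x) }.

Record Monad (C : Category) := {
  mondata :> MonadData C;
  monlaws : MonadLaws mondata }.

(* Bimonad structure (opmonoidal structure making μ, η opmonoidal). *)
Record BimonadData (C : Category) (M : Monoidal C) (T : Monad C) := {
  T2 : forall x y, Hom (mobj T (tens M x y)) (tens M (mobj T x) (mobj T y));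
  T0 : Hom (mobj T (munit M)) (munit M) }.
Arguments T2 {C M T} _ _ _.
Arguments T0 {C M T} _.

Record BimonadLaws (C : Category) (M : Monoidal C) (T : Monad C)
    (B : BimonadData M T) : Prop := {
  bi_T2_nat : forall x x' y y' (f : Hom x x') (g : Hom y y'),
      T2 B x' y' · mmap T (tensm M f g) = tensm M (mmap T f) (mmap T g) · T2 B x y;
  bi_coassoc : forall x y z,
      assoc M (mobj T x) (mobj T y) (mobj T z) · tensm M (T2 B x y) (idm (mobj T z))
        · T2 B (tens M x y) z
      = tensm M (idm (mobj T x)) (T2 B y z) · T2 B x (tens M y z)
        · mmap T (assoc M x y z);
  bi_counit_l : forall x,
      lunit M (mobj T x) · tensm M (T0 B) (idm (mobj T x)) · T2 B (munit M) x
      = mmap T (lunit M x);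
  bi_counit_r : forall x,
      runit M (mobj T x) · tensm M (idm (mobj T x)) (T0 B) · T2 B x (munit M)
      = mmap T (runit M x);
  bi_mu2 : forall x y,
      T2 B x y · mu T (tens M x y)
      = tensm M (mu T x) (mu T y) · T2 B (mobj T x) (mobj T y) · mmap T (T2 B x y);
  bi_mu0 : T0 B · mu T (munit M) = T0 B · mmap T (T0 B);
  bi_eta2 : forall x y, T2 B x y · eta T (tens M x y) = tensm M (eta T x) (eta T y);
  bi_eta0 : T0 B · eta T (munit M) = idm (munit M) }.

Record Bimonad (C : Category) (M : Monoidal C) (T : Monad C) := {
  bidata :> BimonadData M T;
  bilaws : BimonadLaws bidata }.

Record SepOpMonad (D : Preduoidal) := {
  smon :> Monad D;
  sbc : Bimonad (circ D) smon;
  sbb : Bimonad (bull D) smon }.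

Section Algebras.
Variables (C : Category) (T : Monad C).

Record Alg := {
  acar : Obj C;
  aact : Hom (mobj T acar) acar;
  a_unit : aact · eta T acar = idm acar;
  a_assoc : aact · mmap T aact = aact · mu T acar }.

Definition is_alg_hom (A B : Alg) (f : Hom (acar A) (acar B)) : Prop :=
  f · aact A = aact B · mmap T f.

Lemma free_alg_unit x : mu T x · eta T (mobj T x) = idm (mobj T x).
Proof. exact (mo_unit_l (monlaws T) x). Qed.
Lemma free_alg_assoc x : mu T x · mmap T (mu T x) = mu T x · mu T (mobj T x).
Proof. exact (mo_assoc (monlaws T) x). Qed.

Definition free_alg (x : Obj C) : Alg :=
  {| acar := mobj T x; aact := mu T x;
     a_unit := free_alg_unit x; a_assoc := free_alg_assoc x |}.

Variables (M : Monoidal C) (B : Bimonad M T).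

Lemma alg_unit_unit : T0 B · eta T (munit M) = idm (munit M).
Proof. exact (bi_eta0 (bilaws B)). Qed.
Lemma alg_unit_assoc : T0 B · mmap T (T0 B) = T0 B · mu T (munit M).
Proof. symmetry; exact (bi_mu0 (bilaws B)). Qed.

Definition alg_unit : Alg :=
  {| acar := munit M; aact := T0 B;
     a_unit := alg_unit_unit; a_assoc := alg_unit_assoc |}.

Lemma alg_tens_unit (A A' : Alg) :
  tensm M (aact A) (aact A') · T2 B (acar A) (acar A') · eta T (tens M (acar A) (acar A'))
  = idm (tens M (acar A) (acar A')).
Proof.
  rewrite <- comp_assoc, (bi_eta2 (bilaws B)), <- (ml_tens_comp (mlaws M)),
    !a_unit; exact (ml_tens_id (mlaws M) _ _).
Qed.

Lemma alg_tens_assoc (A A' : Alg) :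
  tensm M (aact A) (aact A') · T2 B (acar A) (acar A')
    · mmap T (tensm M (aact A) (aact A') · T2 B (acar A) (acar A'))
  = tensm M (aact A) (aact A') · T2 B (acar A) (acar A')
    · mu T (tens M (acar A) (acar A')).
Proof.
  pose proof (monlaws T) as HT; pose proof (mlaws M) as HM; pose proof (bilaws B) as HB.
  rewrite (mo_map_comp HT), !comp_assoc.
  rewrite <- (comp_assoc _ (T2 B _ _) (mmap T _)), (bi_T2_nat HB), comp_assoc.
  rewrite <- (ml_tens_comp HM), !a_assoc, (ml_tens_comp HM).
  rewrite <- !comp_assoc, (bi_mu2 HB), !comp_assoc. reflexivity.
Qed.

Definition alg_tens (A A' : Alg) : Alg :=
  {| acar := tens M (acar A) (acar A');
     aact := tensm M (aact A) (aact A') · T2 B (acar A) (acar A');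
     a_unit := alg_tens_unit A A'; a_assoc := alg_tens_assoc A A' |}.

End Algebras.
Arguments is_alg_hom {C T} A B f.
Arguments free_alg {C} T x.
Arguments alg_unit {C T M} B.
Arguments alg_tens {C T M} B A A'.

Section DuoidalLift.
Variables (D : Preduoidal) (T : SepOpMonad D).

Local Notation co := (tens (circ D)).
Local Notation ct := (tensm (circ D)).
Local Notation Bot := (munit (circ D)).
Local Notation cassoc := (assoc (circ D)).
Local Notation clunit := (lunit (circ D)).
Local Notation clunit_inv := (lunit_inv (circ D)).
Local Notation crunit := (runit (circ D)).
Local Notation crunit_inv := (runit_inv (circ D)).
Local Notation bo := (tens (bull D)).
Local Notation bt := (tensm (bull D)).
Local Notation One := (munit (bull D)).
Local Notation bassoc := (assoc (bull D)).
Local Notation blunit := (lunit (bull D)).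
Local Notation blunit_inv := (lunit_inv (bull D)).
Local Notation brunit := (runit (bull D)).
Local Notation brunit_inv := (runit_inv (bull D)).
Local Notation Tt := (mobj T).
Local Notation Tf := (mmap T).
Local Notation muT := (mu T).
Local Notation etaT := (eta T).
Local Notation T2c := (T2 (sbc T)).
Local Notation T0c := (T0 (sbc T)).
Local Notation T2b := (T2 (sbb T)).
Local Notation T0b := (T0 (sbb T)).
Local Notation actens := (alg_tens (sbc T)).
Local Notation acunit := (alg_unit (sbc T)).
Local Notation abtens := (alg_tens (sbb T)).
Local Notation abunit := (alg_unit (sbb T)).

Definition XiType : Type :=
  forall A B C E : Alg T,
    Hom (co (bo (acar A) (acar B)) (bo (acar C) (acar E)))
        (bo (co (acar A) (acar C)) (co (acar B) (acar E))).

Definition RType : Type :=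
  forall a b c d : Obj D,
    Hom (co (bo a b) (bo c d)) (bo (co (Tt a) (Tt c)) (co (Tt b) (Tt d))).

Record UnitData (nu : Hom Bot (bo Bot Bot)) (varpi : Hom (co One One) One)
    (iota : Hom Bot One) : Prop := {
  ud_nu_alg : is_alg_hom acunit (abtens acunit acunit) nu;
  ud_varpi_alg : is_alg_hom (actens abunit abunit) abunit varpi;
  ud_iota_alg : is_alg_hom acunit abunit iota;
  ud_mon_assoc : varpi · ct varpi (idm One)
                 = varpi · ct (idm One) varpi · cassoc One One One;
  ud_mon_unit_l : varpi · ct iota (idm One) = clunit One;
  ud_mon_unit_r : varpi · ct (idm One) iota = crunit One;
  ud_comon_assoc : bassoc Bot Bot Bot · bt nu (idm Bot) · nu
                   = bt (idm Bot) nu · nu;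
  ud_comon_unit_l : blunit Bot · bt iota (idm Bot) · nu = idm Bot;
  ud_comon_unit_r : brunit Bot · bt (idm Bot) iota · nu = idm Bot }.

Record DuoidalLift (xi : XiType) (nu : Hom Bot (bo Bot Bot))
    (varpi : Hom (co One One) One) (iota : Hom Bot One) : Prop := {
  dl_units : UnitData nu varpi iota;
  dl_xi_alg : forall A B C E : Alg T,
      is_alg_hom (actens (abtens A B) (abtens C E))
                 (abtens (actens A C) (actens B E)) (xi A B C E);
  dl_xi_nat : forall (A A' B B' C C' E E' : Alg T)
      (f : Hom (acar A) (acar A')) (g : Hom (acar B) (acar B'))
      (h : Hom (acar C) (acar C')) (k : Hom (acar E) (acar E')),
      is_alg_hom A A' f -> is_alg_hom B B' g ->
      is_alg_hom C C' h -> is_alg_hom E E' k ->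
      xi A' B' C' E' · ct (bt f g) (bt h k) = bt (ct f h) (ct g k) · xi A B C E;
  dl_A1 : forall X Y A B C E : Alg T,
      bt (cassoc (acar X) (acar A) (acar C)) (cassoc (acar Y) (acar B) (acar E))
        · xi (actens X A) (actens Y B) C E
        · ct (xi X Y A B) (idm (bo (acar C) (acar E)))
      = xi X Y (actens A C) (actens B E)
        · ct (idm (bo (acar X) (acar Y))) (xi A B C E)
        · cassoc (bo (acar X) (acar Y)) (bo (acar A) (acar B)) (bo (acar C) (acar E));
  dl_A2 : forall X A Y B C E : Alg T,
      bassoc (co (acar X) (acar Y)) (co (acar A) (acar B)) (co (acar C) (acar E))
        · bt (xi X A Y B) (idm (co (acar C) (acar E)))
        · xi (abtens X A) C (abtens Y B) E
      = bt (idm (co (acar X) (acar Y))) (xi A C B E)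
        · xi X (abtens A C) Y (abtens B E)
        · ct (bassoc (acar X) (acar A) (acar C)) (bassoc (acar Y) (acar B) (acar E));
  dl_U1 : forall A B : Alg T,
      xi acunit acunit A B · ct nu (idm (bo (acar A) (acar B)))
      = bt (clunit_inv (acar A)) (clunit_inv (acar B)) · clunit (bo (acar A) (acar B));
  dl_U2 : forall A B : Alg T,
      xi A B acunit acunit · ct (idm (bo (acar A) (acar B))) nu
      = bt (crunit_inv (acar A)) (crunit_inv (acar B)) · crunit (bo (acar A) (acar B));
  dl_U3 : forall A B : Alg T,
      bt varpi (idm (co (acar A) (acar B))) · xi abunit A abunit B
      = blunit_inv (co (acar A) (acar B)) · ct (blunit (acar A)) (blunit (acar B));
  dl_U4 : forall A B : Alg T,
      bt (idm (co (acar A) (acar B))) varpi · xi A abunit B abunit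
      = brunit_inv (co (acar A) (acar B)) · ct (brunit (acar A)) (brunit (acar B)) }.

(* An R-matrix on T (associators inserted where the paper suppresses them). *)
Record RMatrix (R : RType) (nu : Hom Bot (bo Bot Bot))
    (varpi : Hom (co One One) One) (iota : Hom Bot One) : Prop := {
  rm_units : UnitData nu varpi iota;
  rm_nat : forall a a' b b' c c' d d' (f : Hom a a') (g : Hom b b')
      (h : Hom c c') (k : Hom d d'),
      R a' b' c' d' · ct (bt f g) (bt h k)
      = bt (ct (Tf f) (Tf h)) (ct (Tf g) (Tf k)) · R a b c d;
  rm_unit1 : forall A B : Alg T,
      bt (ct T0c (aact A)) (ct T0c (aact B)) · R Bot Bot (acar A) (acar B)
        · ct nu (idm (bo (acar A) (acar B)))
      = bt (clunit_inv (acar A)) (clunit_inv (acar B)) · clunit (bo (acar A) (acar B));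
  rm_unit2 : forall A B : Alg T,
      bt (ct (aact A) T0c) (ct (aact B) T0c) · R (acar A) (acar B) Bot Bot
        · ct (idm (bo (acar A) (acar B))) nu
      = bt (crunit_inv (acar A)) (crunit_inv (acar B)) · crunit (bo (acar A) (acar B));
  rm_unit3 : forall A B : Alg T,
      bt varpi (idm (co (acar A) (acar B)))
        · bt (ct T0b T0b) (ct (aact A) (aact B)) · R One (acar A) One (acar B)
      = blunit_inv (co (acar A) (acar B)) · ct (blunit (acar A)) (blunit (acar B));
  rm_unit4 : forall A B : Alg T,
      bt (idm (co (acar A) (acar B))) varpi
        · bt (ct (aact A) (aact B)) (ct T0b T0b) · R (acar A) One (acar B) One
      = brunit_inv (co (acar A) (acar B)) · ct (brunit (acar A)) (brunit (acar B));
  rm_lift : forall a b c d,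
      bt (ct (muT a) (muT c)) (ct (muT b) (muT d)) · R (Tt a) (Tt b) (Tt c) (Tt d)
        · ct (T2b a b) (T2b c d) · T2c (bo a b) (bo c d)
      = bt (ct (muT a) (muT c)) (ct (muT b) (muT d))
        · bt (T2c (Tt a) (Tt c)) (T2c (Tt b) (Tt d))
        · T2b (co (Tt a) (Tt c)) (co (Tt b) (Tt d)) · Tf (R a b c d);
  rm_1 : forall a b c d x y,
      bt (cassoc (Tt a) (Tt c) (Tt x)) (cassoc (Tt b) (Tt d) (Tt y))
        · bt (ct (ct (muT a) (muT c)) (idm (Tt x))) (ct (ct (muT b) (muT d)) (idm (Tt y)))
        · bt (ct (T2c (Tt a) (Tt c)) (idm (Tt x))) (ct (T2c (Tt b) (Tt d)) (idm (Tt y)))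
        · R (co (Tt a) (Tt c)) (co (Tt b) (Tt d)) x y
        · ct (R a b c d) (idm (bo x y))
      = bt (ct (idm (Tt a)) (ct (muT c) (muT x))) (ct (idm (Tt b)) (ct (muT d) (muT y)))
        · bt (ct (idm (Tt a)) (T2c (Tt c) (Tt x))) (ct (idm (Tt b)) (T2c (Tt d) (Tt y)))
        · R a b (co (Tt c) (Tt x)) (co (Tt d) (Tt y))
        · ct (idm (bo a b)) (R c d x y)
        · cassoc (bo a b) (bo c d) (bo x y);
  rm_2 : forall x a y b c d,
      bassoc (co (Tt x) (Tt y)) (co (Tt a) (Tt b)) (co (Tt c) (Tt d))
        · bt (bt (ct (muT x) (muT y)) (ct (muT a) (muT b))) (idm (co (Tt c) (Tt d)))
        · bt (R (Tt x) (Tt a) (Tt y) (Tt b)) (idm (co (Tt c) (Tt d)))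
        · bt (ct (T2b x a) (T2b y b)) (idm (co (Tt c) (Tt d)))
        · R (bo x a) c (bo y b) d
      = bt (idm (co (Tt x) (Tt y))) (bt (ct (muT a) (muT b)) (ct (muT c) (muT d)))
        · bt (idm (co (Tt x) (Tt y))) (R (Tt a) (Tt c) (Tt b) (Tt d))
        · bt (idm (co (Tt x) (Tt y))) (ct (T2b a c) (T2b b d))
        · R x (bo a c) y (bo b d)
        · ct (bassoc x a c) (bassoc y b d) }.

Definition R_of_xi (xi : XiType) : RType :=
  fun a b c d =>
    xi (free_alg T a) (free_alg T b) (free_alg T c) (free_alg T d)
      · ct (bt (etaT a) (etaT b)) (bt (etaT c) (etaT d)).

End DuoidalLift.

Set Implicit Arguments.

(* Every morphism that the R-matrix axioms compose with R is a T-algebra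
   morphism f out of a free algebra (an action, mu, T g, T_2 or an identity).
   Naturality of xi along algebra morphisms turns f · R into xi at the target
   algebras followed by a tensor of the f · eta, and f · eta = id when f is an
   action.  So each R-matrix axiom is the corresponding duoidal axiom of xi at
   free or lifted algebras (U1-U4, A1, A2, xi being an algebra morphism), up to
   naturality of the associators and of T_2. *)

Section MonoidalFacts.
Variables (C : Category) (M : Monoidal C).

Lemma tensm_compE {x x' x'' y y' y'' : Obj C} (f : Hom x x') (f' : Hom x' x'')
    (g : Hom y y') (g' : Hom y' y'') :
  tensm M f' g' · tensm M f g = tensm M (f' · f) (g' · g).
Proof. symmetry; apply (ml_tens_comp (mlaws M)). Qed.

Lemma tensm_idE (x y : Obj C) : tensm M (idm x) (idm y) = idm (tens M x y).
Proof. apply (ml_tens_id (mlaws M)). Qed.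

End MonoidalFacts.

Section AlgebraHoms.
Variables (C : Category) (T : Monad C).

Lemma action_is_alg_hom (A : Alg T) : is_alg_hom (free_alg T (acar A)) A (aact A).
Proof. symmetry; apply a_assoc. Qed.

Lemma idm_is_alg_hom (A : Alg T) : is_alg_hom A A (idm (acar A)).
Proof.
  unfold is_alg_hom. rewrite comp_idl, (mo_map_id (monlaws T)), comp_idr.
  reflexivity.
Qed.

Lemma mmap_is_alg_hom {x y : Obj C} (f : Hom x y) :
  is_alg_hom (free_alg T x) (free_alg T y) (mmap T f).
Proof. symmetry; apply (mo_mu_nat (monlaws T)). Qed.

Variables (M : Monoidal C) (B : Bimonad M T).

Lemma T2_is_alg_hom (x y : Obj C) :
  is_alg_hom (free_alg T (tens M x y))
    (alg_tens B (free_alg T x) (free_alg T y)) (T2 B x y).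
Proof. apply (bi_mu2 (bilaws B)). Qed.

Lemma free_alg_tens_action_eta (x y : Obj C) :
  aact (alg_tens B (free_alg T x) (free_alg T y))
    · mmap T (tensm M (eta T x) (eta T y))
  = T2 B x y.
Proof.
  cbn. rewrite <- comp_assoc, (bi_T2_nat (bilaws B)), comp_assoc,
    tensm_compE, !(mo_unit_r (monlaws T)), tensm_idE.
  apply comp_idl.
Qed.

End AlgebraHoms.

Section RMatrixOfXi.
Variables (D : Preduoidal) (T : SepOpMonad D) (xi : XiType T)
  (nu : Hom (munit (circ D)) (tens (bull D) (munit (circ D)) (munit (circ D))))
  (varpi : Hom (tens (circ D) (munit (bull D)) (munit (bull D))) (munit (bull D)))
  (iota : Hom (munit (circ D)) (munit (bull D))).
Hypothesis duo : DuoidalLift xi nu varpi iota.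

Local Notation co := (tens (circ D)).
Local Notation ct := (tensm (circ D)).
Local Notation cassoc := (assoc (circ D)).
Local Notation bo := (tens (bull D)).
Local Notation bassoc := (assoc (bull D)).
Local Notation bt := (tensm (bull D)).
Local Notation Tt := (mobj T).
Local Notation F := (free_alg T).
Local Notation R := (R_of_xi xi).

(* Instances of the lemmas at free or lifted algebras carry unreduced
   [acar (free_alg T a)], [aact (alg_tens _ _ _)] in implicit arguments, which
   [rewrite] does not match up to conversion; normalise both sides first. *)
Tactic Notation "rewrite_alg" constr(E) :=
  let e := fresh in pose proof E as e;
  cbn [acar aact free_alg alg_unit alg_tens] in e |- *; rewrite e; clear e.

Lemma R_of_xi_alg_hom (a b c d : Obj D) (A B C E : Alg T)
    (f : Hom (Tt a) (acar A)) (g : Hom (Tt b) (acar B))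
    (h : Hom (Tt c) (acar C)) (k : Hom (Tt d) (acar E)) :
  is_alg_hom (F a) A f -> is_alg_hom (F b) B g ->
  is_alg_hom (F c) C h -> is_alg_hom (F d) E k ->
  bt (ct f h) (ct g k) · R a b c d
  = xi A B C E · ct (bt (f · eta T a) (g · eta T b)) (bt (h · eta T c) (k · eta T d)).
Proof.
  intros Hf Hg Hh Hk. unfold R_of_xi.
  rewrite comp_assoc. rewrite_alg (eq_sym (dl_xi_nat duo Hf Hg Hh Hk)).
  rewrite <- comp_assoc, !tensm_compE. reflexivity.
Qed.

Lemma R_of_xi_action (A B C E : Alg T) :
  bt (ct (aact A) (aact C)) (ct (aact B) (aact E)) · R (acar A) (acar B) (acar C) (acar E)
  = xi A B C E.
Proof.
  rewrite (R_of_xi_alg_hom (action_is_alg_hom A) (action_is_alg_hom B)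
    (action_is_alg_hom C) (action_is_alg_hom E)), !a_unit, !tensm_idE.
  apply comp_idr.
Qed.

Lemma R_of_xi_action_idm (A B : Alg T) (x y : Obj D) :
  bt (ct (aact A) (idm (Tt x))) (ct (aact B) (idm (Tt y))) · R (acar A) (acar B) x y
  = xi A B (F x) (F y) · ct (idm (bo (acar A) (acar B))) (bt (eta T x) (eta T y)).
Proof.
  rewrite_alg (R_of_xi_alg_hom (action_is_alg_hom A) (action_is_alg_hom B)
    (idm_is_alg_hom (F x)) (idm_is_alg_hom (F y))).
  rewrite !a_unit, !comp_idl, tensm_idE.
  reflexivity.
Qed.

Lemma R_of_xi_idm_action (x y : Obj D) (A B : Alg T) :
  bt (ct (idm (Tt x)) (aact A)) (ct (idm (Tt y)) (aact B)) · R x y (acar A) (acar B)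
  = xi (F x) (F y) A B · ct (bt (eta T x) (eta T y)) (idm (bo (acar A) (acar B))).
Proof.
  rewrite_alg (R_of_xi_alg_hom (idm_is_alg_hom (F x)) (idm_is_alg_hom (F y))
    (action_is_alg_hom A) (action_is_alg_hom B)).
  rewrite !a_unit, !comp_idl, tensm_idE.
  reflexivity.
Qed.

Lemma R_of_xi_T2_idm x a y b c d :
  bt (ct (T2 (sbb T) x a) (T2 (sbb T) y b)) (idm (co (Tt c) (Tt d)))
    · R (bo x a) c (bo y b) d
  = xi (alg_tens (sbb T) (F x) (F a)) (F c) (alg_tens (sbb T) (F y) (F b)) (F d)
    · ct (bt (bt (eta T x) (eta T a)) (eta T c)) (bt (bt (eta T y) (eta T b)) (eta T d)).
Proof.
  rewrite <- tensm_idE.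
  rewrite_alg (R_of_xi_alg_hom (T2_is_alg_hom (sbb T) x a) (idm_is_alg_hom (F c))
    (T2_is_alg_hom (sbb T) y b) (idm_is_alg_hom (F d))).
  rewrite !(bi_eta2 (bilaws (sbb T))), !comp_idl. reflexivity.
Qed.

Lemma R_of_xi_idm_T2 x a y b c d :
  bt (idm (co (Tt x) (Tt y))) (ct (T2 (sbb T) a c) (T2 (sbb T) b d))
    · R x (bo a c) y (bo b d)
  = xi (F x) (alg_tens (sbb T) (F a) (F c)) (F y) (alg_tens (sbb T) (F b) (F d))
    · ct (bt (eta T x) (bt (eta T a) (eta T c))) (bt (eta T y) (bt (eta T b) (eta T d))).
Proof.
  rewrite <- tensm_idE.
  rewrite_alg (R_of_xi_alg_hom (idm_is_alg_hom (F x)) (T2_is_alg_hom (sbb T) a c)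
    (idm_is_alg_hom (F y)) (T2_is_alg_hom (sbb T) b d)).
  rewrite !(bi_eta2 (bilaws (sbb T))), !comp_idl. reflexivity.
Qed.

Lemma R_of_xi_nat a a' b b' c c' d d' (f : Hom a a') (g : Hom b b')
    (h : Hom c c') (k : Hom d d') :
  R a' b' c' d' · ct (bt f g) (bt h k)
  = bt (ct (mmap T f) (mmap T h)) (ct (mmap T g) (mmap T k)) · R a b c d.
Proof.
  rewrite_alg (R_of_xi_alg_hom (mmap_is_alg_hom T f) (mmap_is_alg_hom T g)
    (mmap_is_alg_hom T h) (mmap_is_alg_hom T k)).
  unfold R_of_xi. rewrite <- comp_assoc, !tensm_compE, !(mo_eta_nat (monlaws T)).
  reflexivity.
Qed.

Lemma R_of_xi_lunit_circ (A B : Alg T) :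
  bt (ct (T0 (sbc T)) (aact A)) (ct (T0 (sbc T)) (aact B))
    · R (munit (circ D)) (munit (circ D)) (acar A) (acar B)
    · ct nu (idm (bo (acar A) (acar B)))
  = bt (lunit_inv (circ D) (acar A)) (lunit_inv (circ D) (acar B))
    · lunit (circ D) (bo (acar A) (acar B)).
Proof.
  rewrite_alg (R_of_xi_action (alg_unit (sbc T)) (alg_unit (sbc T)) A B).
  apply (dl_U1 duo).
Qed.

Lemma R_of_xi_runit_circ (A B : Alg T) :
  bt (ct (aact A) (T0 (sbc T))) (ct (aact B) (T0 (sbc T)))
    · R (acar A) (acar B) (munit (circ D)) (munit (circ D))
    · ct (idm (bo (acar A) (acar B))) nu
  = bt (runit_inv (circ D) (acar A)) (runit_inv (circ D) (acar B))
    · runit (circ D) (bo (acar A) (acar B)).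
Proof.
  rewrite_alg (R_of_xi_action A B (alg_unit (sbc T)) (alg_unit (sbc T))).
  apply (dl_U2 duo).
Qed.

Lemma R_of_xi_lunit_bull (A B : Alg T) :
  bt varpi (idm (co (acar A) (acar B)))
    · bt (ct (T0 (sbb T)) (T0 (sbb T))) (ct (aact A) (aact B))
    · R (munit (bull D)) (acar A) (munit (bull D)) (acar B)
  = lunit_inv (bull D) (co (acar A) (acar B))
    · ct (lunit (bull D) (acar A)) (lunit (bull D) (acar B)).
Proof.
  rewrite <- comp_assoc.
  rewrite_alg (R_of_xi_action (alg_unit (sbb T)) A (alg_unit (sbb T)) B).
  apply (dl_U3 duo).
Qed.

Lemma R_of_xi_runit_bull (A B : Alg T) :
  bt (idm (co (acar A) (acar B))) varpi
    · bt (ct (aact A) (aact B)) (ct (T0 (sbb T)) (T0 (sbb T)))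
    · R (acar A) (munit (bull D)) (acar B) (munit (bull D))
  = runit_inv (bull D) (co (acar A) (acar B))
    · ct (runit (bull D) (acar A)) (runit (bull D) (acar B)).
Proof.
  rewrite <- comp_assoc.
  rewrite_alg (R_of_xi_action A (alg_unit (sbb T)) B (alg_unit (sbb T))).
  apply (dl_U4 duo).
Qed.

Lemma R_of_xi_lift a b c d :
  bt (ct (mu T a) (mu T c)) (ct (mu T b) (mu T d)) · R (Tt a) (Tt b) (Tt c) (Tt d)
    · ct (T2 (sbb T) a b) (T2 (sbb T) c d) · T2 (sbc T) (bo a b) (bo c d)
  = bt (ct (mu T a) (mu T c)) (ct (mu T b) (mu T d))
    · bt (T2 (sbc T) (Tt a) (Tt c)) (T2 (sbc T) (Tt b) (Tt d))
    · T2 (sbb T) (co (Tt a) (Tt c)) (co (Tt b) (Tt d)) · mmap T (R a b c d).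
Proof.
  rewrite_alg (R_of_xi_action (F a) (F b) (F c) (F d)).
  rewrite tensm_compE.
  unfold R_of_xi. rewrite (mo_map_comp (monlaws T)), comp_assoc.
  rewrite_alg (eq_sym (dl_xi_alg duo (F a) (F b) (F c) (F d))).
  rewrite <- !comp_assoc, (bi_T2_nat (bilaws (sbc T))), !comp_assoc.
  rewrite <- (comp_assoc _ (ct _ _) (ct _ _)), tensm_compE.
  rewrite_alg (free_alg_tens_action_eta (sbb T) a b).
  rewrite_alg (free_alg_tens_action_eta (sbb T) c d).
  reflexivity.
Qed.

Lemma R_of_xi_circ_assoc a b c d x y :
  bt (cassoc (Tt a) (Tt c) (Tt x)) (cassoc (Tt b) (Tt d) (Tt y))
    · bt (ct (ct (mu T a) (mu T c)) (idm (Tt x))) (ct (ct (mu T b) (mu T d)) (idm (Tt y)))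
    · bt (ct (T2 (sbc T) (Tt a) (Tt c)) (idm (Tt x))) (ct (T2 (sbc T) (Tt b) (Tt d)) (idm (Tt y)))
    · R (co (Tt a) (Tt c)) (co (Tt b) (Tt d)) x y
    · ct (R a b c d) (idm (bo x y))
  = bt (ct (idm (Tt a)) (ct (mu T c) (mu T x))) (ct (idm (Tt b)) (ct (mu T d) (mu T y)))
    · bt (ct (idm (Tt a)) (T2 (sbc T) (Tt c) (Tt x))) (ct (idm (Tt b)) (T2 (sbc T) (Tt d) (Tt y)))
    · R a b (co (Tt c) (Tt x)) (co (Tt d) (Tt y))
    · ct (idm (bo a b)) (R c d x y)
    · cassoc (bo a b) (bo c d) (bo x y).
Proof.
  rewrite <- (comp_assoc _ (bt _ _) (bt _ _)), (tensm_compE (bull D) (ct _ _) (ct _ _)),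
    !(tensm_compE (circ D)), !comp_idl.
  rewrite <- (comp_assoc _ (bt _ _) (R _ _ _ _)).
  rewrite_alg (R_of_xi_action_idm
    (alg_tens (sbc T) (F a) (F c)) (alg_tens (sbc T) (F b) (F d)) x y).
  rewrite !(tensm_compE (bull D)), !(tensm_compE (circ D)), !comp_idl.
  rewrite_alg (R_of_xi_idm_action a b
    (alg_tens (sbc T) (F c) (F x)) (alg_tens (sbc T) (F d) (F y))).
  unfold R_of_xi.
  transitivity (bt (cassoc (Tt a) (Tt c) (Tt x)) (cassoc (Tt b) (Tt d) (Tt y))
    · xi (alg_tens (sbc T) (F a) (F c)) (alg_tens (sbc T) (F b) (F d)) (F x) (F y)
    · ct (xi (F a) (F b) (F c) (F d)) (idm (bo (Tt x) (Tt y)))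
    · ct (ct (bt (eta T a) (eta T b)) (bt (eta T c) (eta T d))) (bt (eta T x) (eta T y))).
  { rewrite <- !comp_assoc. do 2 f_equal.
    rewrite !tensm_compE, !comp_idl, !comp_idr. reflexivity. }
  rewrite_alg (dl_A1 duo (F a) (F b) (F c) (F d) (F x) (F y)).
  rewrite <- comp_assoc, (ml_assoc_nat (mlaws (circ D))), !comp_assoc.
  f_equal. rewrite <- !comp_assoc. f_equal.
  rewrite !tensm_compE, !comp_idl, !comp_idr. reflexivity.
Qed.

Lemma R_of_xi_bull_assoc x a y b c d :
  bassoc (co (Tt x) (Tt y)) (co (Tt a) (Tt b)) (co (Tt c) (Tt d))
    · bt (bt (ct (mu T x) (mu T y)) (ct (mu T a) (mu T b))) (idm (co (Tt c) (Tt d)))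
    · bt (R (Tt x) (Tt a) (Tt y) (Tt b)) (idm (co (Tt c) (Tt d)))
    · bt (ct (T2 (sbb T) x a) (T2 (sbb T) y b)) (idm (co (Tt c) (Tt d)))
    · R (bo x a) c (bo y b) d
  = bt (idm (co (Tt x) (Tt y))) (bt (ct (mu T a) (mu T b)) (ct (mu T c) (mu T d)))
    · bt (idm (co (Tt x) (Tt y))) (R (Tt a) (Tt c) (Tt b) (Tt d))
    · bt (idm (co (Tt x) (Tt y))) (ct (T2 (sbb T) a c) (T2 (sbb T) b d))
    · R x (bo a c) y (bo b d)
    · ct (bassoc x a c) (bassoc y b d).
Proof.
  rewrite <- (comp_assoc _ (bt _ _) (bt (R _ _ _ _) _)), tensm_compE, comp_idl.
  rewrite_alg (R_of_xi_action (F x) (F a) (F y) (F b)).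
  rewrite <- (comp_assoc _ (bt _ _) (R _ _ _ _)), R_of_xi_T2_idm.
  rewrite (tensm_compE (bull D) _ _ (R _ _ _ _)), comp_idl.
  rewrite_alg (R_of_xi_action (F a) (F c) (F b) (F d)).
  rewrite <- (comp_assoc _ (bt _ _) (R _ _ _ _)), R_of_xi_idm_T2, !comp_assoc.
  rewrite_alg (dl_A2 duo (F x) (F a) (F y) (F b) (F c) (F d)).
  rewrite <- !comp_assoc, !tensm_compE, <- !(ml_assoc_nat (mlaws (bull D))).
  reflexivity.
Qed.

End RMatrixOfXi.

Theorem mainTheorem3 (D : Preduoidal) (T : SepOpMonad D) (xi : XiType T)
    (nu : Hom (munit (circ D)) (tens (bull D) (munit (circ D)) (munit (circ D))))
    (varpi : Hom (tens (circ D) (munit (bull D)) (munit (bull D))) (munit (bull D)))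
    (iota : Hom (munit (circ D)) (munit (bull D))) :
  DuoidalLift xi nu varpi iota -> RMatrix (R_of_xi xi) nu varpi iota.
Proof.
  intro duo. constructor.
  - exact (dl_units duo).
  - exact (R_of_xi_nat duo).
  - exact (R_of_xi_lunit_circ duo).
  - exact (R_of_xi_runit_circ duo).
  - exact (R_of_xi_lunit_bull duo).
  - exact (R_of_xi_runit_bull duo).
  - exact (R_of_xi_lift duo).
  - exact (R_of_xi_circ_assoc duo).
  - exact (R_of_xi_bull_assoc duo).
Qed.
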